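(* Let $0<q<1\le p$, $A\in\mathbb{R}^{m\times n}$, $\bar{x}\in\mathbb{R}^n$, $b:=A\bar{x}$, and let $S$ be the number of nonzero groups of $\bar{x}$. Suppose every nonzero group of $\bar{x}$ is active, and the columns of $A$ indexed by the nonzero components of $\bar{x}$ are linearly independent; let $B$ be the submatrix of $A$ formed by these columns. Then there exist $\kappa>0$ and, for each $\lambda\in(0,\kappa)$, a local minimizer $x^*(\lambda)$ of $F_\lambda(x):=\|Ax-b\|_2^2+\lambda\|x\|_{p,q}^q$ such that $$\|x^*(\lambda)-\bar{x}\|_2^2\le\lambda^2q^2S\,\|(B^\top B)^{-1}\|^2\max_{i:\bar{x}_{\mathcal{G}_i}\ne0}\Big(\|\bar{x}_{\mathcal{G}_i}\|_p^{2(q-p)}\sum_{j\in\mathcal{G}_i}|\bar{x}_j|^{2p-2}\Big)\quad\text{for all }\lambda\in(0,\kappa).$$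
   Context: Group structure: $\{1,\dots,n\}$ is partitioned into disjoint nonempty index sets $\mathcal{G}_1,\dots,\mathcal{G}_r$; $x_{\mathcal{G}_i}$ is the subvector indexed by $\mathcal{G}_i$; $\|x\|_{p,q}:=(\sum_{i=1}^r\|x_{\mathcal{G}_i}\|_p^q)^{1/q}$. A group $x_{\mathcal{G}_i}$ is nonzero if some component is nonzero, and active if all its components are nonzero. $\|\cdot\|$ for a matrix is the spectral (operator 2-) norm. *)

From Stdlib Require Import Reals Lra ClassicalEpsilon.
Open Scope R_scope.

(* Vectors in R^n are functions nat -> R (only indices < n matter);
   m x n matrices are functions nat -> nat -> R. *)

Fixpoint fsum (n : nat) (f : nat -> R) : R :=
  match n with O => 0 | S k => fsum k f + f k end.

Fixpoint fmax (n : nat) (f : nat -> R) : R :=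
  match n with O => 0 | S k => Rmax (fmax k f) (f k) end.

(* real power t^a for t >= 0, with the convention 0^a = 0 (used for a > 0) *)
Definition rpow (t a : R) : R := if Rle_dec t 0 then 0 else Rpower t a.

(* Group structure: g j is the index of the group containing j; the groups are
   G_i = { j < n | g j = i }, i < r. *)
Definition is_partition (n r : nat) (g : nat -> nat) : Prop :=
  (forall j, (j < n)%nat -> (g j < r)%nat) /\
  (forall i, (i < r)%nat -> exists j, (j < n)%nat /\ g j = i).

Definition gnorm (n : nat) (g : nat -> nat) (p : R) (x : nat -> R) (i : nat) : R :=
  rpow (fsum n (fun j => if Nat.eqb (g j) i then rpow (Rabs (x j)) p else 0)) (1 / p).

Definition pq_q (n r : nat) (g : nat -> nat) (p q : R) (x : nat -> R) : R :=
  fsum r (fun i => rpow (gnorm n g p x i) q).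

Definition group_nonzero (n : nat) (g : nat -> nat) (x : nat -> R) (i : nat) : Prop :=
  exists j, (j < n)%nat /\ g j = i /\ x j <> 0.

Definition group_active (n : nat) (g : nat -> nat) (x : nat -> R) (i : nat) : Prop :=
  forall j, (j < n)%nat -> g j = i -> x j <> 0.

Definition num_nonzero_groups (n r : nat) (g : nat -> nat) (x : nat -> R) : R :=
  fsum r (fun i => if excluded_middle_informative (group_nonzero n g x i) then 1 else 0).

Definition matvec (n : nat) (A : nat -> nat -> R) (x : nat -> R) : nat -> R :=
  fun l => fsum n (fun k => A l k * x k).

Definition norm2sq (n : nat) (v : nat -> R) : R := fsum n (fun j => v j ^ 2).

Definition Flam (m n r : nat) (g : nat -> nat) (p q : R) (A : nat -> nat -> R)
  (xbar : nat -> R) (lam : R) (x : nat -> R) : R :=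
  norm2sq m (fun l => matvec n A x l - matvec n A xbar l) + lam * pq_q n r g p q x.

Definition local_minimizer (n : nat) (f : (nat -> R) -> R) (x : nat -> R) : Prop :=
  exists delta, 0 < delta /\
    forall y, norm2sq n (fun j => y j - x j) < delta ^ 2 -> f x <= f y.

Definition supp (xbar : nat -> R) (j : nat) : bool :=
  if Req_EM_T (xbar j) 0 then false else true.

Definition gram (m : nat) (A : nat -> nat -> R) (j k : nat) : R :=
  fsum m (fun l => A l j * A l k).

(* C is the inverse of B^T B, where B = columns of A indexed by T;
   matrices over T x T are represented by their entries at indices in T. *)
Definition is_inverse_on_supp (m n : nat) (A : nat -> nat -> R) (xbar : nat -> R)
  (C : nat -> nat -> R) : Prop :=
  forall i k, (i < n)%nat -> (k < n)%nat -> supp xbar i = true -> supp xbar k = true ->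
    fsum n (fun j => if supp xbar j then C i j * gram m A j k else 0)
      = (if Nat.eqb i k then 1 else 0) /\
    fsum n (fun j => if supp xbar j then gram m A i j * C j k else 0)
      = (if Nat.eqb i k then 1 else 0).

Definition supp_norm (n : nat) (xbar v : nat -> R) : R :=
  sqrt (fsum n (fun j => if supp xbar j then v j ^ 2 else 0)).

Definition spec_set (n : nat) (xbar : nat -> R) (C : nat -> nat -> R) : R -> Prop :=
  fun t => exists v, supp_norm n xbar v <= 1 /\
    t = supp_norm n xbar (fun i => fsum n (fun j => if supp xbar j then C i j * v j else 0)).

Definition spec_norm (n : nat) (xbar : nat -> R) (C : nat -> nat -> R) : R :=
  epsilon (inhabits 0) (fun c => is_lub (spec_set n xbar C) c).

Definition max_term (n r : nat) (g : nat -> nat) (p q : R) (xbar : nat -> R) : R :=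
  fmax r (fun i =>
    if excluded_middle_informative (group_nonzero n g xbar i) then
      rpow (gnorm n g p xbar i) (2 * (q - p)) *
      fsum n (fun j => if Nat.eqb (g j) i then rpow (Rabs (xbar j)) (2 * p - 2) else 0)
    else 0).

(* Let T be the support of xbar and pick c > 1 with c^(2p) = 2 and a radius rho with
   rho <= (1 - 1/c) |xbar_j| on T. Minimize F_lam over the compact box
   { |y_j - xbar_j| <= rho on T, y_j = 0 off T }. A minimizer z satisfies
   ||A (z - xbar)||^2 <= F_lam(xbar) = lam ||xbar||_{p,q}^q, and since
   z - xbar = (B^T B)^{-1} B^T A (z - xbar) it lies in the inner half of the box once lam is
   small. It is then a local minimizer on all of R^n: moving the coordinates on T stays in the
   box, and moving a coordinate off T by t costs lam |t|^q, which for q < 1 beats the linear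
   change |t| * O(1) of the residual. On T the first-order condition reads
   z - xbar = -(lam/2) (B^T B)^{-1} grad ||z||_{p,q}^q, and the gradient is compared with its
   value at xbar using |xbar_j|/c <= |z_j| <= c |xbar_j|: the resulting powers of c are at
   most c^(2p) = 2, which produces exactly the factor lam^2 q^2 of the bound. *)

From Stdlib Require Import Reals Lra Lia Classical ClassicalEpsilon FunctionalExtensionality.
From mathcomp Require ssreflect ssrfun ssrbool eqtype ssrnat fintype order ssralg matrix interval.
From mathcomp Require classical_sets topology normedtype derive Rstruct Rstruct_topology.
Open Scope R_scope.

(** * Finite sums and real powers *)

Lemma fsum_ext n F G : (forall j, (j < n)%nat -> F j = G j) -> fsum n F = fsum n G.
Proof.
  induction n as [|n IH]; intros H; simpl; auto.
  rewrite IH by (intros; apply H; lia). rewrite H by lia. reflexivity.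
Qed.

Lemma fsum_plus n F G : fsum n (fun j => F j + G j) = fsum n F + fsum n G.
Proof. induction n as [|n IH]; simpl; [ring|]. rewrite IH; ring. Qed.

Lemma fsum_minus n F G : fsum n (fun j => F j - G j) = fsum n F - fsum n G.
Proof. induction n as [|n IH]; simpl; [ring|]. rewrite IH; ring. Qed.

Lemma fsum_mult_l n c F : fsum n (fun j => c * F j) = c * fsum n F.
Proof. induction n as [|n IH]; simpl; [ring|]. rewrite IH; ring. Qed.

Lemma fsum_mult_r n c F : fsum n (fun j => F j * c) = fsum n F * c.
Proof. induction n as [|n IH]; simpl; [ring|]. rewrite IH; ring. Qed.

Lemma fsum_const n c : fsum n (fun _ => c) = INR n * c.
Proof. induction n as [|n IH]; simpl fsum; [simpl; ring|]. rewrite IH, S_INR; ring. Qed.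

Lemma fsum_le n F G : (forall j, (j < n)%nat -> F j <= G j) -> fsum n F <= fsum n G.
Proof.
  induction n as [|n IH]; intros H; simpl; [lra|].
  apply Rplus_le_compat; [apply IH; intros; apply H|apply H]; lia.
Qed.

Lemma fsum_eq_0 n F : (forall j, (j < n)%nat -> F j = 0) -> fsum n F = 0.
Proof. intros H. rewrite (fsum_ext n F (fun _ => 0)), fsum_const by auto. ring. Qed.

Lemma fsum_nonneg n F : (forall j, (j < n)%nat -> 0 <= F j) -> 0 <= fsum n F.
Proof. intros H. rewrite <- (fsum_eq_0 n (fun _ => 0)) by auto. apply fsum_le; auto. Qed.

Lemma fsum_term_le n F k :
  (forall j, (j < n)%nat -> 0 <= F j) -> (k < n)%nat -> F k <= fsum n F.
Proof.
  induction n as [|n IH]; intros H Hk; simpl; [lia|].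
  destruct (Nat.eq_dec k n) as [->|Hkn].
  - assert (0 <= fsum n F) by (apply fsum_nonneg; intros; apply H; lia). lra.
  - assert (F k <= fsum n F) by (apply IH; [intros; apply H|]; lia).
    assert (0 <= F n) by (apply H; lia). lra.
Qed.

Lemma fsum_abs n F : Rabs (fsum n F) <= fsum n (fun j => Rabs (F j)).
Proof.
  induction n as [|n IH]; simpl; [rewrite Rabs_R0; lra|].
  eapply Rle_trans; [apply Rabs_triang|lra].
Qed.

Lemma fsum_swap n m (F : nat -> nat -> R) :
  fsum n (fun i => fsum m (fun j => F i j)) = fsum m (fun j => fsum n (fun i => F i j)).
Proof.
  induction n as [|n IH]; simpl.
  - rewrite fsum_eq_0; auto.
  - rewrite IH, <- fsum_plus. reflexivity.
Qed.

Lemma fsum_delta n k F :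
  (k < n)%nat -> fsum n (fun j => if Nat.eqb j k then F j else 0) = F k.
Proof.
  induction n as [|n IH]; intros Hk; simpl; [lia|].
  destruct (Nat.eq_dec k n) as [->|Hkn].
  - rewrite Nat.eqb_refl, fsum_eq_0; [ring|].
    intros j Hj. destruct (Nat.eqb_spec j n); [lia|auto].
  - destruct (Nat.eqb_spec n k); [lia|]. rewrite IH by lia. ring.
Qed.

Lemma fsum_delta_l n k F :
  (k < n)%nat -> fsum n (fun j => if Nat.eqb k j then F j else 0) = F k.
Proof.
  intros Hk. rewrite <- (fsum_delta n k F Hk). apply fsum_ext.
  intros j _. rewrite Nat.eqb_sym. reflexivity.
Qed.

Lemma fsum_update n k F G : (k < n)%nat ->
  (forall j, (j < n)%nat -> j <> k -> G j = F j) -> fsum n G = fsum n F - F k + G k.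
Proof.
  intros Hk H.
  rewrite (fsum_ext n G (fun j => F j + (if Nat.eqb j k then G j - F j else 0))).
  - rewrite fsum_plus, (fsum_delta n k (fun j => G j - F j)) by auto. ring.
  - intros j Hj. destruct (Nat.eqb_spec j k) as [->|]; [ring|]. rewrite H by auto. ring.
Qed.

Lemma fsum_by_groups n r (g : nat -> nat) F : (forall j, (j < n)%nat -> (g j < r)%nat) ->
  fsum n F = fsum r (fun i => fsum n (fun j => if Nat.eqb (g j) i then F j else 0)).
Proof.
  intros H. rewrite fsum_swap. apply fsum_ext. intros j Hj.
  rewrite (fsum_delta_l r (g j) (fun _ => F j)) by auto. reflexivity.
Qed.

Lemma fmax_ge r f k : (k < r)%nat -> f k <= fmax r f.
Proof.
  induction r as [|r IH]; intros Hk; simpl; [lia|].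
  destruct (Nat.eq_dec k r) as [->|]; [apply Rmax_r|].
  eapply Rle_trans; [apply IH; lia|apply Rmax_l].
Qed.

Lemma Rpower_pos t a : 0 < Rpower t a.
Proof. apply exp_pos. Qed.

Lemma Rpower_le_nonpos a b c : c <= 0 -> 0 < a <= b -> Rpower b c <= Rpower a c.
Proof.
  intros Hc [Ha Hab]. rewrite <- (Ropp_involutive c), !(Rpower_Ropp _ (- c)).
  apply Rinv_le_contravar; [apply (Rpower_pos a)|]. apply Rle_Rpower_l; lra.
Qed.

Lemma Rpower_inv_l c a : 0 < c -> Rpower (/ c) a = Rpower c (- a).
Proof. intros Hc. unfold Rpower. rewrite ln_Rinv by auto. f_equal; ring. Qed.

Lemma Rpower_sqr x a : Rpower x a ^ 2 = Rpower x (2 * a).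
Proof. simpl. rewrite Rmult_1_r, <- Rpower_plus. f_equal; ring. Qed.

Lemma rpow_nonneg t a : 0 <= rpow t a.
Proof. unfold rpow. destruct (Rle_dec t 0); [lra|left; apply Rpower_pos]. Qed.

Lemma rpow_Rpower t a : 0 < t -> rpow t a = Rpower t a.
Proof. unfold rpow. destruct (Rle_dec t 0); [lra|auto]. Qed.

Lemma rpow_le_0 t a : t <= 0 -> rpow t a = 0.
Proof. unfold rpow. destruct (Rle_dec t 0); [auto|lra]. Qed.

Lemma rpow_gt_0 t a : 0 < t -> 0 < rpow t a.
Proof. intros. rewrite rpow_Rpower by auto. apply Rpower_pos. Qed.

Lemma rpow_le_compat e s t : 0 < e -> s <= t -> rpow s e <= rpow t e.
Proof.
  intros He Hst. destruct (Rle_dec s 0).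
  - rewrite rpow_le_0 by auto. apply rpow_nonneg.
  - rewrite !rpow_Rpower by lra. apply Rle_Rpower_l; lra.
Qed.

Lemma rpow_rpow t a b : 0 < a -> rpow (rpow t a) b = rpow t (a * b).
Proof.
  intros Ha. destruct (Rle_dec t 0).
  - rewrite !(rpow_le_0 t) by auto. apply rpow_le_0; lra.
  - rewrite (rpow_Rpower t a), (rpow_Rpower (Rpower t a)), (rpow_Rpower t)
      by (apply Rpower_pos || lra).
    apply Rpower_mult.
Qed.

Lemma rpow_rpow_inv t p : 0 <= t -> 0 < p -> rpow (rpow t p) (1 / p) = t.
Proof.
  intros Ht Hp. rewrite rpow_rpow by auto. destruct (Req_dec t 0) as [->|].
  - apply rpow_le_0; lra.
  - rewrite rpow_Rpower by lra. replace (p * (1 / p)) with 1 by (field; lra).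
    apply Rpower_1; lra.
Qed.

(** * Continuity and minimizers on boxes *)

Definition continuous_coords (n : nat) (f : (nat -> R) -> R) : Prop :=
  forall x eps, 0 < eps -> exists d, 0 < d /\ forall y,
    (forall j, (j < n)%nat -> Rabs (y j - x j) < d) -> Rabs (f y - f x) < eps.

Lemma continuity_pt_eps f x : continuity_pt f x <->
  (forall eps, 0 < eps -> exists d, 0 < d /\
     forall y, Rabs (y - x) < d -> Rabs (f y - f x) < eps).
Proof.
  unfold continuity_pt, continue_in, limit1_in, limit_in; simpl; unfold R_dist, D_x, no_cond.
  split; intros H eps He; destruct (H eps He) as [d [Hd H']]; exists d; split; auto.
  - intros y Hy. destruct (Req_dec y x) as [->|]; [rewrite Rminus_diag, Rabs_R0; auto|].
    apply H'. auto.
  - intros y [_ Hy]. auto.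
Qed.

Lemma continuity_rpow a : 0 < a -> continuity (fun t => rpow t a).
Proof.
  intros Ha x. apply continuity_pt_eps. intros eps He.
  destruct (Rtotal_order x 0) as [Hx|[->|Hx]].
  - exists (- x). split; [lra|]. intros y Hy. apply Rabs_def2 in Hy.
    rewrite !rpow_le_0, Rminus_diag, Rabs_R0 by lra. auto.
  - exists (Rpower eps (1 / a)). split; [apply Rpower_pos|]. intros y Hy.
    rewrite Rminus_0_r in Hy. rewrite (rpow_le_0 0), Rminus_0_r, Rabs_pos_eq
      by (lra || apply rpow_nonneg).
    destruct (Rle_dec y 0); [rewrite rpow_le_0; auto|].
    rewrite rpow_Rpower, <- (Rpower_1 eps) by lra.
    replace 1 with (1 / a * a) by (field; lra). rewrite <- Rpower_mult.
    apply Rlt_Rpower_l; [auto|]. rewrite Rabs_pos_eq in Hy; lra.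
  - assert (Hc : continuity_pt (fun t => Rpower t a) x).
    { apply derivable_continuous_pt. exists (a * Rpower x (a - 1)).
      apply derivable_pt_lim_power; auto. }
    rewrite continuity_pt_eps in Hc. destruct (Hc eps He) as [d [Hd H]].
    exists (Rmin d x). split; [apply Rmin_pos; auto|]. intros y Hy.
    assert (Hyd : Rabs (y - x) < d) by (eapply Rlt_le_trans; [apply Hy|apply Rmin_l]).
    assert (Hyx : Rabs (y - x) < x) by (eapply Rlt_le_trans; [apply Hy|apply Rmin_r]).
    apply Rabs_def2 in Hyx. rewrite !rpow_Rpower by lra. auto.
Qed.

Lemma continuous_coords_const n c : continuous_coords n (fun _ => c).
Proof.
  intros x eps He. exists 1. split; [lra|]. intros. rewrite Rminus_diag, Rabs_R0; auto.
Qed.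

Lemma continuous_coords_coord n j : (j < n)%nat -> continuous_coords n (fun x => x j).
Proof. intros Hj x eps He. exists eps. auto. Qed.

Lemma continuous_coords_plus n f g :
  continuous_coords n f -> continuous_coords n g -> continuous_coords n (fun x => f x + g x).
Proof.
  intros Hf Hg x eps He.
  destruct (Hf x (eps / 2)) as [d1 [Hd1 H1]]; [lra|].
  destruct (Hg x (eps / 2)) as [d2 [Hd2 H2]]; [lra|].
  exists (Rmin d1 d2). split; [apply Rmin_pos; auto|]. intros y Hy.
  specialize (H1 y (fun j Hj => Rlt_le_trans _ _ _ (Hy j Hj) (Rmin_l _ _))).
  specialize (H2 y (fun j Hj => Rlt_le_trans _ _ _ (Hy j Hj) (Rmin_r _ _))).
  replace (f y + g y - (f x + g x)) with ((f y - f x) + (g y - g x)) by ring.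
  eapply Rle_lt_trans; [apply Rabs_triang|lra].
Qed.

Lemma continuous_coords_mult n f g :
  continuous_coords n f -> continuous_coords n g -> continuous_coords n (fun x => f x * g x).
Proof.
  intros Hf Hg x eps He.
  set (M := Rabs (f x) + Rabs (g x) + 1).
  pose proof (Rabs_pos (f x)) as Hf0. pose proof (Rabs_pos (g x)) as Hg0.
  assert (HM : Rabs (f x) + 1 <= M /\ Rabs (g x) + 1 <= M) by (unfold M; lra).
  set (e := Rmin 1 (eps / (4 * M))).
  assert (He1 : 0 < e) by (apply Rmin_pos; [lra|apply Rdiv_lt_0_compat; lra]).
  assert (He2 : e <= 1) by apply Rmin_l. assert (He3 : e <= eps / (4 * M)) by apply Rmin_r.
  assert (HeM : e * M <= eps / 4).
  { replace (eps / 4) with (eps / (4 * M) * M) by (field; lra).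
    apply Rmult_le_compat_r; lra. }
  destruct (Hf x e He1) as [d1 [Hd1 H1]]. destruct (Hg x e He1) as [d2 [Hd2 H2]].
  exists (Rmin d1 d2). split; [apply Rmin_pos; auto|]. intros y Hy.
  specialize (H1 y (fun j Hj => Rlt_le_trans _ _ _ (Hy j Hj) (Rmin_l _ _))).
  specialize (H2 y (fun j Hj => Rlt_le_trans _ _ _ (Hy j Hj) (Rmin_r _ _))).
  assert (Rabs (g y) <= Rabs (g x) + 1).
  { replace (g y) with (g x + (g y - g x)) by ring.
    eapply Rle_trans; [apply Rabs_triang|lra]. }
  replace (f y * g y - f x * g x) with ((f y - f x) * g y + f x * (g y - g x)) by ring.
  eapply Rle_lt_trans; [apply Rabs_triang|]. rewrite !Rabs_mult.
  assert (Rabs (f y - f x) * Rabs (g y) <= e * M)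
    by (apply Rmult_le_compat; try apply Rabs_pos; lra).
  assert (Rabs (f x) * Rabs (g y - g x) <= M * e)
    by (apply Rmult_le_compat; try apply Rabs_pos; lra).
  lra.
Qed.

Lemma continuous_coords_comp n f (phi : R -> R) :
  continuity phi -> continuous_coords n f -> continuous_coords n (fun x => phi (f x)).
Proof.
  intros Hphi Hf x eps He.
  destruct (proj1 (continuity_pt_eps phi (f x)) (Hphi (f x)) eps He) as [d1 [Hd1 H1]].
  destruct (Hf x d1 Hd1) as [d [Hd H]]. exists d. auto.
Qed.

Lemma continuous_coords_fsum n k (F : nat -> (nat -> R) -> R) :
  (forall i, (i < k)%nat -> continuous_coords n (F i)) ->
  continuous_coords n (fun x => fsum k (fun i => F i x)).
Proof.
  induction k as [|k IH]; intros H; simpl; [apply continuous_coords_const|].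
  apply continuous_coords_plus; [apply IH; intros|]; apply H; lia.
Qed.

Lemma continuous_coords_Flam m n r g p q A xbar lam :
  0 < p -> 0 < q -> continuous_coords n (Flam m n r g p q A xbar lam).
Proof.
  intros Hp Hq. unfold Flam, norm2sq, pq_q, gnorm, matvec.
  assert (Hlin : forall l, continuous_coords n (fun x => fsum n (fun k => A l k * x k))).
  { intros l. apply (continuous_coords_fsum n n (fun k x => A l k * x k)). intros k Hk.
    apply continuous_coords_mult; [apply continuous_coords_const|apply continuous_coords_coord; auto]. }
  apply continuous_coords_plus.
  - apply (continuous_coords_fsum n m
      (fun l x => (fsum n (fun k => A l k * x k) - fsum n (fun k => A l k * xbar k)) ^ 2)).
    intros l _. apply (continuous_coords_comp n _ (fun t => (t - _) ^ 2)).
    + apply derivable_continuous. reg.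
    + apply Hlin.
  - apply continuous_coords_mult; [apply continuous_coords_const|].
    apply continuous_coords_fsum. intros i _.
    apply (continuous_coords_comp n _ (fun t => rpow (rpow t (1 / p)) q)).
    { intros t. apply (continuity_pt_comp (fun t => rpow t (1 / p)) (fun s => rpow s q)).
      - apply continuity_rpow, Rdiv_lt_0_compat; lra.
      - apply (continuity_rpow q Hq). }
    apply (continuous_coords_fsum n n
      (fun j x => if Nat.eqb (g j) i then rpow (Rabs (x j)) p else 0)).
    intros j Hj. destruct (Nat.eqb (g j) i); [|apply continuous_coords_const].
    apply (continuous_coords_comp n _ (fun t => rpow (Rabs t) p)).
    + intros t. apply (continuity_pt_comp Rabs (fun s => rpow s p)).
      * apply Rcontinuity_abs.
      * apply (continuity_rpow p Hp).
    + apply continuous_coords_coord; auto.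
Qed.

Module BoxMinimum.
Import ssreflect ssrfun ssrbool eqtype ssrnat fintype order ssralg matrix interval.
Import classical_sets topology normedtype derive Rstruct Rstruct_topology.
Import Order.POrderTheory.
Local Open Scope classical_set_scope.

Definition of_row n (v : 'rV[R]_n) : nat -> R :=
  fun j => if insub j is Some i then v ord0 i else 0.

Arguments of_row {n}.

Lemma of_row_ord n (v : 'rV[R]_n) (i : 'I_n) : of_row v i = v ord0 i.
Proof. by rewrite /of_row valK. Qed.

Lemma box_min_exists n (f : (nat -> R) -> R) (lo hi : nat -> R) :
  (forall j, lo j <= hi j) -> continuous_coords n f ->
  (forall x y, (forall j, (j < n)%coq_nat -> x j = y j) -> f x = f y) ->
  exists z, (forall j, (j < n)%coq_nat -> lo j <= z j <= hi j) /\
    forall y, (forall j, (j < n)%coq_nat -> lo j <= y j <= hi j) -> f z <= f y.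
Proof.
move=> lohi fc fext.
pose B := [set v : 'rV[R]_n | forall i : 'I_n, `[lo i, hi i]%classic (v ord0 i)].
have B0 : B !=set0.
  by exists (\row_i lo i)%R => i /=; rewrite mxE in_itv /= lexx; apply/RleP.
have cB : compact B.
  by apply: (@rV_compact _ _ (fun i => `[lo i, hi i]%classic)) => i; exact: segment_compact.
have cF : continuous (f \o @of_row n).
  move=> x; apply/(@cvg_ballP _ _ _ (nbhs x) (nbhs_filter x)) => e /RltP e0.
  have [d [/RltP d0 Hd]] := fc (of_row x) e e0.
  apply/nbhs_ballP; exists d => //= y [_ /(_ ord0)] xy.
  rewrite /ball /= -RabsE -Rabs_Ropp Ropp_minus_distr; apply/RltP; apply: Hd => j /ssrnat.ltP jn.
  have := xy (Ordinal jn); rewrite /ball /= -RabsE -Rabs_Ropp Ropp_minus_distr.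
  by rewrite -[j]/(Ordinal jn : nat) !of_row_ord => /RltP.
have [c /[!inE] cB' cmin] := EVT_min_rV B0 cB (continuous_subspaceT cF).
exists (of_row c); split.
- move=> j /ssrnat.ltP jn; have := cB' (Ordinal jn).
  rewrite /= in_itv /= -[j]/(Ordinal jn : nat) of_row_ord.
  by move=> /andP[/RleP h1 /RleP h2].
- move=> y yB; rewrite (fext y (of_row (\row_(i < n) y i)%R)).
    apply/RleP; apply: cmin; rewrite inE => i /=; rewrite mxE in_itv /=.
    by have [h1 h2] := yB i (ssrnat.ltP (ltn_ord i)); apply/andP; split; apply/RleP.
  by move=> j /ssrnat.ltP jn; rewrite -[j]/(Ordinal jn : nat) of_row_ord mxE.
Qed.
End BoxMinimum.

(** * The group penalty *)

Lemma supp_true xbar j : supp xbar j = true <-> xbar j <> 0.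
Proof. unfold supp. destruct (Req_EM_T (xbar j) 0); split; congruence || tauto. Qed.

Lemma supp_false xbar j : supp xbar j = false <-> xbar j = 0.
Proof. unfold supp. destruct (Req_EM_T (xbar j) 0); split; congruence || tauto. Qed.

Lemma norm2sq_nonneg m v : 0 <= norm2sq m v.
Proof. apply fsum_nonneg. intros; apply pow2_ge_0. Qed.

Lemma norm2sq_ext m a b : (forall l, (l < m)%nat -> a l = b l) -> norm2sq m a = norm2sq m b.
Proof. intros H. apply fsum_ext. intros l Hl. rewrite H; auto. Qed.

Lemma Rabs_le_sqrt_norm2sq m v l : (l < m)%nat -> Rabs (v l) <= sqrt (norm2sq m v).
Proof.
  intros Hl. rewrite <- (sqrt_pow2 (Rabs (v l))), pow2_abs by apply Rabs_pos.
  apply sqrt_le_1_alt.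
  apply (fsum_term_le m (fun l => v l ^ 2)); auto. intros; apply pow2_ge_0.
Qed.

Lemma Rabs_lt_of_norm2sq n v d j : 0 < d -> norm2sq n v < d ^ 2 -> (j < n)%nat -> Rabs (v j) < d.
Proof.
  intros Hd H Hj. pose proof (Rabs_le_sqrt_norm2sq n v j Hj).
  rewrite <- (sqrt_pow2 d) by lra. eapply Rle_lt_trans; [eauto|].
  apply sqrt_lt_1_alt. split; [apply norm2sq_nonneg|auto].
Qed.

Lemma matvec_minus n A x y l :
  matvec n A x l - matvec n A y l = matvec n A (fun j => x j - y j) l.
Proof. unfold matvec. rewrite <- fsum_minus. apply fsum_ext. intros; ring. Qed.

Definition gsum_pow (n : nat) (g : nat -> nat) (p : R) (x : nat -> R) (i : nat) : R :=
  fsum n (fun j => if Nat.eqb (g j) i then rpow (Rabs (x j)) p else 0).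

Lemma gnorm_gsum_pow n g p x i : gnorm n g p x i = rpow (gsum_pow n g p x i) (1 / p).
Proof. reflexivity. Qed.

Lemma gsum_pow_term_le n g p x j : (j < n)%nat -> rpow (Rabs (x j)) p <= gsum_pow n g p x (g j).
Proof.
  intros Hj.
  pose proof (fsum_term_le n
    (fun j0 => if Nat.eqb (g j0) (g j) then rpow (Rabs (x j0)) p else 0) j) as H.
  simpl in H. rewrite Nat.eqb_refl in H. apply H; auto.
  intros j0 _. destruct (Nat.eqb (g j0) (g j)); [apply rpow_nonneg|lra].
Qed.

Lemma Rabs_le_gnorm n g p x j : 0 < p -> (j < n)%nat -> Rabs (x j) <= gnorm n g p x (g j).
Proof.
  intros Hp Hj. rewrite gnorm_gsum_pow, <- (rpow_rpow_inv (Rabs (x j)) p) at 1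
    by (apply Rabs_pos || auto).
  apply rpow_le_compat; [apply Rdiv_lt_0_compat; lra|apply gsum_pow_term_le; auto].
Qed.

Lemma gnorm_eq_0 n g p x i : 0 < p ->
  (forall j, (j < n)%nat -> g j = i -> x j = 0) -> gnorm n g p x i = 0.
Proof.
  intros Hp H. rewrite gnorm_gsum_pow, rpow_le_0; [auto|]. unfold gsum_pow.
  rewrite fsum_eq_0; [lra|]. intros j Hj.
  destruct (Nat.eqb_spec (g j) i); [|auto]. rewrite H, Rabs_R0 by auto. apply rpow_le_0; lra.
Qed.

Lemma gnorm_ext n g p x y i : (forall j, (j < n)%nat -> g j = i -> x j = y j) ->
  gnorm n g p x i = gnorm n g p y i.
Proof.
  intros H. rewrite !gnorm_gsum_pow. unfold gsum_pow. f_equal. apply fsum_ext. intros j Hj.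
  destruct (Nat.eqb_spec (g j) i); [rewrite H|]; auto.
Qed.

Lemma pq_q_nonneg n r g p q x : 0 <= pq_q n r g p q x.
Proof. apply fsum_nonneg. intros; apply rpow_nonneg. Qed.

Lemma rpow_Rabs_le_pq_q n r g p q x j : 0 < p -> 0 < q -> (j < n)%nat -> (g j < r)%nat ->
  rpow (Rabs (x j)) q <= pq_q n r g p q x.
Proof.
  intros Hp Hq Hj Hg. eapply Rle_trans;
    [|apply (fsum_term_le r (fun i => rpow (gnorm n g p x i) q) (g j)); auto;
      intros; apply rpow_nonneg].
  apply rpow_le_compat; auto. apply Rabs_le_gnorm; auto.
Qed.

Lemma Flam_ext m n r g p q A xbar lam x y : (forall j, (j < n)%nat -> x j = y j) ->
  Flam m n r g p q A xbar lam x = Flam m n r g p q A xbar lam y.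
Proof.
  intros H. unfold Flam, pq_q, matvec. f_equal.
  - apply norm2sq_ext. intros l _. f_equal. apply fsum_ext. intros k Hk. rewrite H; auto.
  - f_equal. apply fsum_ext. intros i _. f_equal. apply gnorm_ext. auto.
Qed.

Definition on_supp (xbar y : nat -> R) : nat -> R := fun j => if supp xbar j then y j else 0.
Definition off_supp (xbar y : nat -> R) : nat -> R := fun j => if supp xbar j then 0 else y j.

(* Activeness is what makes every group lie entirely on or entirely off the support. *)
Lemma pq_q_supp_split n r g p q xbar y : 0 < p -> 0 < q ->
  (forall i, (i < r)%nat -> group_nonzero n g xbar i -> group_active n g xbar i) ->
  pq_q n r g p q y = pq_q n r g p q (on_supp xbar y) + pq_q n r g p q (off_supp xbar y).
Proof.
  intros Hp Hq Hact. unfold pq_q. rewrite <- fsum_plus. apply fsum_ext. intros i Hi.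
  destruct (classic (group_nonzero n g xbar i)) as [Hnz|Hz].
  - assert (Hin : forall j, (j < n)%nat -> g j = i -> supp xbar j = true)
      by (intros; apply supp_true, (Hact i Hi Hnz); auto).
    rewrite (gnorm_eq_0 n g p (off_supp xbar y)), (rpow_le_0 0), Rplus_0_r by
      (lra || auto || (intros j Hj Hgj; unfold off_supp; rewrite Hin; auto)).
    f_equal. apply gnorm_ext. intros j Hj Hgj. unfold on_supp. rewrite Hin; auto.
  - assert (Hout : forall j, (j < n)%nat -> g j = i -> supp xbar j = false).
    { intros j Hj Hgj. apply supp_false. apply NNPP. intros Hx. apply Hz. exists j; auto. }
    rewrite (gnorm_eq_0 n g p (on_supp xbar y)), (rpow_le_0 0), Rplus_0_l by
      (lra || auto || (intros j Hj Hgj; unfold on_supp; rewrite Hout; auto)).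
    f_equal. apply gnorm_ext. intros j Hj Hgj. unfold off_supp. rewrite Hout; auto.
Qed.

Definition shift_coord (z : nat -> R) (k : nat) (t : R) : nat -> R :=
  fun j => z j + (if Nat.eqb j k then t else 0).

Lemma shift_coord_0 z k j : shift_coord z k 0 j = z j.
Proof. unfold shift_coord. destruct (Nat.eqb j k); ring. Qed.

Lemma matvec_shift_coord n A z k t l : (k < n)%nat ->
  matvec n A (shift_coord z k t) l = matvec n A z l + t * A l k.
Proof.
  intros Hk. unfold matvec, shift_coord.
  rewrite (fsum_ext n _ (fun j => A l j * z j + (if Nat.eqb j k then t * A l j else 0))).
  - rewrite fsum_plus, (fsum_delta n k (fun j => t * A l j)); auto.
  - intros j _. destruct (Nat.eqb j k); ring.
Qed.

Lemma gsum_pow_shift_coord n g p z k t : (k < n)%nat ->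
  gsum_pow n g p (shift_coord z k t) (g k)
  = gsum_pow n g p z (g k) - rpow (Rabs (z k)) p + rpow (Rabs (z k + t)) p.
Proof.
  intros Hk. unfold gsum_pow.
  rewrite (fsum_update n k (fun j => if Nat.eqb (g j) (g k) then rpow (Rabs (z j)) p else 0));
    auto.
  - unfold shift_coord. rewrite !Nat.eqb_refl. reflexivity.
  - intros j Hj Hjk. unfold shift_coord.
    destruct (Nat.eqb_spec j k); [lia|]. rewrite Rplus_0_r. reflexivity.
Qed.

Lemma Flam_shift_coord m n r g p q A xbar lam z k t : (k < n)%nat -> (g k < r)%nat ->
  Flam m n r g p q A xbar lam (shift_coord z k t) - Flam m n r g p q A xbar lam z =
  2 * t * fsum m (fun l => (matvec n A z l - matvec n A xbar l) * A l k)
  + t ^ 2 * norm2sq m (fun l => A l k)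
  + lam * (rpow (gnorm n g p (shift_coord z k t) (g k)) q - rpow (gnorm n g p z (g k)) q).
Proof.
  intros Hk Hg. unfold Flam, pq_q.
  rewrite (fsum_update r (g k) (fun i => rpow (gnorm n g p z i) q)); auto.
  2:{ intros i Hi Hik. f_equal. apply gnorm_ext. intros j Hj Hgj.
      unfold shift_coord. destruct (Nat.eqb_spec j k); [congruence|ring]. }
  rewrite (norm2sq_ext m _ (fun l => (matvec n A z l - matvec n A xbar l) + t * A l k))
    by (intros l _; rewrite matvec_shift_coord by auto; ring).
  unfold norm2sq.
  replace (fsum m (fun l => (matvec n A z l - matvec n A xbar l + t * A l k) ^ 2))
    with (fsum m (fun l => (matvec n A z l - matvec n A xbar l) ^ 2)
          + 2 * t * fsum m (fun l => (matvec n A z l - matvec n A xbar l) * A l k)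
          + t ^ 2 * fsum m (fun l => A l k ^ 2))
    by (rewrite <- !fsum_mult_l, <- !fsum_plus; apply fsum_ext; intros; ring).
  ring.
Qed.

(** * The first-order condition *)

Definition sgn (x : R) : R := if Rlt_dec 0 x then 1 else -1.

Lemma Rabs_sgn x : Rabs (sgn x) = 1.
Proof.
  unfold sgn. destruct (Rlt_dec 0 x); [apply Rabs_R1|rewrite Rabs_left; lra].

Qed.

Lemma derivable_pt_lim_Rabs_shift a : a <> 0 ->
  derivable_pt_lim (fun t => Rabs (a + t)) 0 (sgn a).
Proof.
  intros Ha. rewrite <- (Rmult_1_r (sgn a)).
  apply (derivable_pt_lim_comp (fun t => a + t) Rabs).
  - rewrite <- (Rplus_0_l 1).
    apply derivable_pt_lim_plus; [apply derivable_pt_lim_const|apply derivable_pt_lim_id].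
  - rewrite Rplus_0_r. unfold sgn. destruct (Rlt_dec 0 a).
    + apply Rabs_derive_1; auto.
    + apply Rabs_derive_2; lra.
Qed.

Lemma derivable_pt_lim_group_term a W p e : a <> 0 -> 0 <= W ->
  derivable_pt_lim (fun t => Rpower (W + Rpower (Rabs (a + t)) p) e) 0
    (e * Rpower (W + Rpower (Rabs a) p) (e - 1) * (p * Rpower (Rabs a) (p - 1) * sgn a)).
Proof.
  intros Ha HW. pose proof (Rabs_pos_lt a Ha) as Hpos.
  apply (derivable_pt_lim_comp (fun t => W + Rpower (Rabs (a + t)) p) (fun s => Rpower s e)).
  - rewrite <- (Rplus_0_l (p * _ * _)). apply derivable_pt_lim_plus; [apply derivable_pt_lim_const|].
    apply (derivable_pt_lim_comp (fun t => Rabs (a + t)) (fun s => Rpower s p)).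
    + apply derivable_pt_lim_Rabs_shift; auto.
    + rewrite Rplus_0_r. apply derivable_pt_lim_power; auto.
  - rewrite Rplus_0_r. apply derivable_pt_lim_power.
    pose proof (Rpower_pos (Rabs a) p). lra.
Qed.

Lemma derivable_pt_lim_quadratic a b : derivable_pt_lim (fun t => 2 * t * a + t ^ 2 * b) 0 (2 * a).
Proof.
  replace (2 * a) with (2 * a * 1 + b * (INR 2 * 0 ^ Init.Nat.pred 2)) by (simpl; ring).
  apply (derivable_pt_lim_plus (fun t => 2 * t * a) (fun t => t ^ 2 * b)).
  - apply (derivable_pt_lim_ext (fun t => 2 * a * t)); [intros; ring|].
    apply derivable_pt_lim_scal, derivable_pt_lim_id.
  - apply (derivable_pt_lim_ext (fun t => b * t ^ 2)); [intros; ring|].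
    apply derivable_pt_lim_scal, derivable_pt_lim_pow.
Qed.

(* Partial derivative in the coordinate [k] of [pq_q] at a point with [z k <> 0]. *)
Definition penalty_grad n g p q (z : nat -> R) k : R :=
  q * Rpower (gsum_pow n g p z (g k)) (q / p - 1) * Rpower (Rabs (z k)) (p - 1) * sgn (z k).

Lemma first_order_condition m n r g p q A xbar lam z k eta :
  0 < p -> 0 < q -> (k < n)%nat -> (g k < r)%nat -> 0 < eta ->
  (forall t, Rabs t < eta -> z k + t <> 0) ->
  (forall t, Rabs t < eta ->
     Flam m n r g p q A xbar lam z <= Flam m n r g p q A xbar lam (shift_coord z k t)) ->
  2 * fsum m (fun l => (matvec n A z l - matvec n A xbar l) * A l k)
  + lam * penalty_grad n g p q z k = 0.
Proof.
  intros Hp Hq Hk Hg He Hnz Hmin.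
  set (a := fsum m (fun l => (matvec n A z l - matvec n A xbar l) * A l k)).
  set (b := norm2sq m (fun l => A l k)).
  set (W := gsum_pow n g p z (g k) - rpow (Rabs (z k)) p).
  set (e := 1 / p * q).
  assert (HW : 0 <= W) by (pose proof (gsum_pow_term_le n g p z k Hk); unfold W; lra).
  assert (Hzk : z k <> 0) by (rewrite <- (Rplus_0_r (z k)); apply Hnz; rewrite Rabs_R0; auto).
  set (F := fun t => 2 * t * a + t ^ 2 * b + lam * Rpower (W + Rpower (Rabs (z k + t)) p) e).
  assert (HF : forall t, Rabs t < eta ->
    F t = Flam m n r g p q A xbar lam (shift_coord z k t) - Flam m n r g p q A xbar lam z
          + lam * rpow (gnorm n g p z (g k)) q).
  { intros t Ht. rewrite Flam_shift_coord by auto. unfold F. fold a b.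
    rewrite gnorm_gsum_pow, rpow_rpow, gsum_pow_shift_coord by (auto; apply Rdiv_lt_0_compat; lra).
    pose proof (Rabs_pos_lt _ (Hnz t Ht)).
    rewrite (rpow_Rpower (Rabs (z k + t))) by auto. fold e W.
    pose proof (Rpower_pos (Rabs (z k + t)) p).
    rewrite rpow_Rpower by lra. ring. }
  assert (HD : derivable_pt_lim F 0 (2 * a + lam * (e * Rpower (W + Rpower (Rabs (z k)) p) (e - 1)
                                    * (p * Rpower (Rabs (z k)) (p - 1) * sgn (z k))))).
  { apply derivable_pt_lim_plus; [apply derivable_pt_lim_quadratic|].
    apply derivable_pt_lim_scal, derivable_pt_lim_group_term; auto. }
  assert (Hmin' : forall t, - eta < t -> t < eta -> F 0 <= F t).
  { intros t Ht1 Ht2. assert (Ht : Rabs t < eta) by (apply Rabs_def1; lra).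
    rewrite !HF by (rewrite ?Rabs_R0; auto).
    rewrite (Flam_ext _ _ _ _ _ _ _ _ _ (shift_coord z k 0) z) by (intros; apply shift_coord_0).
    specialize (Hmin t Ht). lra. }
  assert (Hcrit := deriv_minimum F (- eta) eta 0 (exist _ _ HD) ltac:(lra) He Hmin').
  simpl in Hcrit. rewrite <- Hcrit. do 2 f_equal.
  pose proof (Rabs_pos_lt _ Hzk).
  replace (W + Rpower (Rabs (z k)) p) with (gsum_pow n g p z (g k))
    by (unfold W; rewrite rpow_Rpower by auto; ring).
  unfold penalty_grad, e. replace (1 / p * q - 1) with (q / p - 1) by (field; lra).
  field. lra.
Qed.

(** * Bounding the penalty gradient *)

Lemma Rabs_ratio_bounds c x z rho : 1 < c -> x <> 0 -> rho <= (1 - / c) * Rabs x ->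
  Rabs (z - x) <= rho -> Rabs x / c <= Rabs z <= c * Rabs x.
Proof.
  intros Hc Hx Hrx Hzx. pose proof (Rabs_pos_lt x Hx).
  assert (Hic : 0 < / c < 1) by (split; [apply Rinv_0_lt_compat|rewrite <- Rinv_1;
                                        apply Rinv_lt_contravar]; lra).
  assert (c + / c >= 2).
  { assert (c * (c + / c) = c * c + 1) by (field; lra). pose proof (pow2_ge_0 (c - 1)). nra. }
  pose proof (Rabs_triang_inv z x). pose proof (Rabs_triang_inv x z) as Hxz.
  rewrite Rabs_minus_sym in Hxz. unfold Rdiv. split; nra.
Qed.

Lemma gsum_pow_ratio_ge n g p c xbar z i : 0 < p -> 1 < c ->
  (forall j, (j < n)%nat -> g j = i -> xbar j <> 0 /\ Rabs (xbar j) / c <= Rabs (z j)) ->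
  Rpower c (- p) * gsum_pow n g p xbar i <= gsum_pow n g p z i.
Proof.
  intros Hp Hc H. unfold gsum_pow. rewrite <- fsum_mult_l. apply fsum_le. intros j Hj.
  destruct (Nat.eqb_spec (g j) i) as [Hgj|]; [|lra].
  destruct (H j Hj Hgj) as [Hxj Hzj]. pose proof (Rabs_pos_lt _ Hxj).
  assert (0 < Rabs (xbar j) / c) by (apply Rdiv_lt_0_compat; lra).
  rewrite !rpow_Rpower, <- Rpower_inv_l, Rpower_mult_distr by (lra || apply Rinv_0_lt_compat; lra).
  apply Rle_Rpower_l; [lra|]. unfold Rdiv in *. split; [|lra]. rewrite Rmult_comm; auto.
Qed.

Lemma penalty_grad_sqr_le n g p q xbar z k c :
  1 <= p -> 0 < q -> q < 1 -> 1 < c -> Rpower c (2 * p) = 2 -> (k < n)%nat ->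
  (forall j, (j < n)%nat -> g j = g k ->
     xbar j <> 0 /\ Rabs (xbar j) / c <= Rabs (z j) <= c * Rabs (xbar j)) ->
  penalty_grad n g p q z k ^ 2
  <= 4 * q ^ 2 * (rpow (gnorm n g p xbar (g k)) (2 * (q - p)) * rpow (Rabs (xbar k)) (2 * p - 2)).
Proof.
  intros Hp Hq0 Hq1 Hc Hc2 Hk Hgrp.
  destruct (Hgrp k Hk eq_refl) as [Hxk [Hzk1 Hzk2]]. pose proof (Rabs_pos_lt _ Hxk).
  set (S := gsum_pow n g p z (g k)). set (Sb := gsum_pow n g p xbar (g k)).
  set (a := q / p - 1).
  assert (HSb : 0 < Sb).
  { pose proof (gsum_pow_term_le n g p xbar k Hk). pose proof (rpow_gt_0 (Rabs (xbar k)) p).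
    unfold Sb. lra. }
  assert (HS : Rpower c (- p) * Sb <= S)
    by (apply gsum_pow_ratio_ge; [lra|auto|intros j Hj Hgj; specialize (Hgrp j Hj Hgj); tauto]).
  pose proof (Rpower_pos c (- p)).
  assert (Ha : a <= 0).
  { unfold a, Rdiv. pose proof (Rinv_0_lt_compat p ltac:(lra)).
    assert (Hqp : q * / p <= p * / p) by (apply Rmult_le_compat_r; lra).
    rewrite Rinv_r in Hqp by lra. lra. }
  (* each factor of [penalty_grad] exceeds its value at [xbar] by at most a power of [c] *)
  assert (B1 : Rpower S a <= Rpower c (- p * a) * Rpower Sb a).
  { eapply Rle_trans; [apply Rpower_le_nonpos; [auto|split; [|apply HS]]; nra|].
    rewrite <- Rpower_mult_distr, Rpower_mult by (lra || auto). lra. }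
  assert (B2 : Rpower (Rabs (z k)) (p - 1) <= Rpower c (p - 1) * Rpower (Rabs (xbar k)) (p - 1)).
  { assert (0 < Rabs (xbar k) / c) by (apply Rdiv_lt_0_compat; lra).
    rewrite Rpower_mult_distr by lra. apply Rle_Rpower_l; lra. }
  assert (B3 : Rpower c (- p * a) * Rpower c (p - 1) <= 2).
  { rewrite <- Rpower_plus, <- Hc2. apply Rle_Rpower; [lra|].
    unfold a. replace (- p * (q / p - 1)) with (p - q) by (field; lra). lra. }
  set (X := Rpower Sb a * Rpower (Rabs (xbar k)) (p - 1)).
  assert (HX : 0 < X) by (apply Rmult_lt_0_compat; apply Rpower_pos).
  assert (Habs : Rabs (penalty_grad n g p q z k) <= 2 * q * X).
  { unfold penalty_grad. fold S a. rewrite !Rabs_mult, Rabs_sgn, Rmult_1_r, (Rabs_pos_eq q) by lra.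
    rewrite !Rabs_pos_eq by (left; apply Rpower_pos).
    rewrite Rmult_assoc. replace (2 * q * X) with (q * (2 * X)) by ring.
    apply Rmult_le_compat_l; [lra|].
    apply Rle_trans with (Rpower c (- p * a) * Rpower Sb a
                          * (Rpower c (p - 1) * Rpower (Rabs (xbar k)) (p - 1))).
    - apply Rmult_le_compat; auto; left; apply Rpower_pos.
    - replace (Rpower c (- p * a) * Rpower Sb a * (Rpower c (p - 1) * Rpower (Rabs (xbar k)) (p - 1)))
        with (Rpower c (- p * a) * Rpower c (p - 1) * X) by (unfold X; ring).
      apply Rmult_le_compat_r; lra. }
  assert (HX2 : X ^ 2 = rpow (gnorm n g p xbar (g k)) (2 * (q - p)) * rpow (Rabs (xbar k)) (2 * p - 2)).
  { unfold X. rewrite Rpow_mult_distr, !Rpower_sqr, gnorm_gsum_pow, rpow_rpow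
      by (apply Rdiv_lt_0_compat; lra).
    fold Sb. rewrite !rpow_Rpower by auto. unfold a. f_equal; f_equal; field; lra. }
  rewrite <- HX2, <- (pow2_abs (penalty_grad _ _ _ _ _ _)).
  replace (4 * q ^ 2 * X ^ 2) with ((2 * q * X) ^ 2) by ring.
  apply pow_incr. split; [apply Rabs_pos|auto].
Qed.

Lemma sum_penalty_grad_sqr_le n r g p q xbar z c rho :
  is_partition n r g -> 1 <= p -> 0 < q -> q < 1 ->
  (forall i, (i < r)%nat -> group_nonzero n g xbar i -> group_active n g xbar i) ->
  1 < c -> Rpower c (2 * p) = 2 ->
  (forall j, (j < n)%nat -> supp xbar j = true -> rho <= (1 - / c) * Rabs (xbar j)) ->
  (forall j, (j < n)%nat -> supp xbar j = true -> Rabs (z j - xbar j) <= rho) ->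
  fsum n (fun k => if supp xbar k then penalty_grad n g p q z k ^ 2 else 0)
  <= 4 * (q ^ 2 * num_nonzero_groups n r g xbar * max_term n r g p q xbar).
Proof.
  intros [Hpart _] Hp Hq0 Hq1 Hact Hc1 Hc2 Hrho Hbox.
  rewrite (fsum_by_groups n r g _ Hpart). unfold num_nonzero_groups.
  set (M := max_term n r g p q xbar).
  replace (4 * (q ^ 2 * _ * M)) with (fsum r (fun i =>
      (if excluded_middle_informative (group_nonzero n g xbar i) then 1 else 0) * (4 * q ^ 2 * M)))
    by (rewrite fsum_mult_r; ring).
  apply fsum_le. intros i Hi.
  destruct (excluded_middle_informative (group_nonzero n g xbar i)) as [Hnz|Hz].
  - set (G := rpow (gnorm n g p xbar i) (2 * (q - p))).
    apply Rle_trans with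
      (4 * q ^ 2 * (G * fsum n (fun k => if Nat.eqb (g k) i then rpow (Rabs (xbar k)) (2 * p - 2) else 0))).
    + rewrite <- fsum_mult_l, <- fsum_mult_l. apply fsum_le. intros k Hk.
      destruct (Nat.eqb_spec (g k) i) as [Hgk|]; [|lra].
      assert (Hin : forall j, (j < n)%nat -> g j = i -> xbar j <> 0)
        by (intros; apply (Hact i Hi Hnz); auto).
      rewrite (proj2 (supp_true xbar k)) by auto. unfold G. rewrite <- Hgk.
      apply (penalty_grad_sqr_le n g p q xbar z k c); auto.
      intros j Hj Hgj. split; [apply Hin; congruence|].
      apply (Rabs_ratio_bounds c (xbar j) (z j) rho); auto; [apply Hin; congruence| |];
        [apply Hrho|apply Hbox]; auto; apply supp_true, Hin; congruence.
    + rewrite Rmult_1_l. apply Rmult_le_compat_l; [pose proof (pow2_ge_0 q); lra|].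
      pose proof (fmax_ge r (fun i =>
        if excluded_middle_informative (group_nonzero n g xbar i) then
          rpow (gnorm n g p xbar i) (2 * (q - p)) *
          fsum n (fun j => if Nat.eqb (g j) i then rpow (Rabs (xbar j)) (2 * p - 2) else 0)
        else 0) i Hi) as Hm.
      simpl in Hm. destruct (excluded_middle_informative (group_nonzero n g xbar i)); [|tauto].
      apply Hm.
  - rewrite Rmult_0_l, fsum_eq_0; [lra|]. intros k Hk.
    destruct (Nat.eqb_spec (g k) i); [|auto]. destruct (supp xbar k) eqn:E; [|auto].
    exfalso. apply Hz. exists k. split; [|split]; auto. apply supp_true; auto.
Qed.

(** * The spectral norm and the inverse Gram matrix *)

Definition mulmx_supp (n : nat) (xbar : nat -> R) (C : nat -> nat -> R) (v : nat -> R) : nat -> R :=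
  fun i => fsum n (fun j => if supp xbar j then C i j * v j else 0).

Lemma supp_sum_sqr_nonneg n xbar v : 0 <= fsum n (fun j => if supp xbar j then v j ^ 2 else 0).
Proof. apply fsum_nonneg. intros j _. destruct (supp xbar j); [apply pow2_ge_0|lra]. Qed.

Lemma supp_sqr_le_sum n xbar v j : (j < n)%nat -> supp xbar j = true ->
  v j ^ 2 <= fsum n (fun j => if supp xbar j then v j ^ 2 else 0).
Proof.
  intros Hj Hs. pose proof (fsum_term_le n (fun j => if supp xbar j then v j ^ 2 else 0) j) as H.
  simpl in H. rewrite Hs in H. apply H; auto.
  intros j0 _. destruct (supp xbar j0); [apply pow2_ge_0|lra].
Qed.

Lemma supp_norm_ext n xbar v w : (forall j, (j < n)%nat -> supp xbar j = true -> v j = w j) ->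
  supp_norm n xbar v = supp_norm n xbar w.
Proof.
  intros H. unfold supp_norm. f_equal. apply fsum_ext. intros j Hj.
  destruct (supp xbar j) eqn:E; [rewrite H|]; auto.
Qed.

Lemma supp_norm_scal n xbar a v :
  supp_norm n xbar (fun j => a * v j) = Rabs a * supp_norm n xbar v.
Proof.
  unfold supp_norm.
  rewrite (fsum_ext n _ (fun j => a ^ 2 * (if supp xbar j then v j ^ 2 else 0)))
    by (intros j _; destruct (supp xbar j); ring).
  rewrite fsum_mult_l, sqrt_mult_alt, <- (pow2_abs a), sqrt_pow2
    by (apply pow2_ge_0 || apply Rabs_pos). reflexivity.
Qed.

Lemma Rabs_le_supp_norm n xbar v j : (j < n)%nat -> supp xbar j = true ->
  Rabs (v j) <= supp_norm n xbar v.
Proof.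
  intros Hj Hs. rewrite <- (sqrt_pow2 (Rabs (v j))), pow2_abs by apply Rabs_pos.
  apply sqrt_le_1_alt, supp_sqr_le_sum; auto.
Qed.

Lemma supp_norm_eq_0 n xbar v : supp_norm n xbar v = 0 ->
  forall j, (j < n)%nat -> supp xbar j = true -> v j = 0.
Proof.
  intros H j Hj Hs. pose proof (Rabs_le_supp_norm n xbar v j Hj Hs).
  destruct (Req_dec (v j) 0) as [|Hv]; [auto|]. pose proof (Rabs_pos_lt _ Hv). lra.
Qed.

Lemma spec_set_bounded n xbar C :
  exists M, forall t, spec_set n xbar C t -> t <= M.
Proof.
  exists (sqrt (fsum n (fun i => fsum n (fun j => Rabs (C i j)) ^ 2))).
  intros t [v [Hv ->]]. apply sqrt_le_1_alt, fsum_le. intros i Hi.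
  destruct (supp xbar i); [|apply pow2_ge_0].
  rewrite <- (pow2_abs (fsum _ _)). apply pow_incr. split; [apply Rabs_pos|].
  eapply Rle_trans; [apply fsum_abs|]. apply fsum_le. intros j Hj.
  destruct (supp xbar j) eqn:E; [|rewrite Rabs_R0; apply Rabs_pos].
  rewrite Rabs_mult. pose proof (Rabs_le_supp_norm n xbar v j Hj E).
  pose proof (Rabs_pos (C i j)). pose proof (Rabs_pos (v j)). nra.
Qed.

Lemma spec_norm_is_lub n xbar C : is_lub (spec_set n xbar C) (spec_norm n xbar C).
Proof.
  unfold spec_norm. apply epsilon_spec.
  destruct (spec_set_bounded n xbar C) as [M HM].
  assert (H0 : spec_set n xbar C (supp_norm n xbar (mulmx_supp n xbar C (fun _ => 0)))).
  { exists (fun _ => 0). split; [|reflexivity]. unfold supp_norm.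
    rewrite fsum_eq_0, sqrt_0 by (intros j _; destruct (supp xbar j); ring). lra. }
  destruct (completeness (spec_set n xbar C)) as [c Hc]; [exists M; auto|eexists; eauto|].
  exists c; auto.
Qed.

Lemma supp_norm_mulmx_le n xbar C v :
  supp_norm n xbar (mulmx_supp n xbar C v) <= spec_norm n xbar C * supp_norm n xbar v.
Proof.
  destruct (spec_norm_is_lub n xbar C) as [Hub _].
  set (s := supp_norm n xbar v). assert (Hs : 0 <= s) by apply sqrt_pos.
  destruct (Req_dec s 0) as [E|E].
  - rewrite E, Rmult_0_r, (supp_norm_ext n xbar _ (fun _ => 0)).
    + unfold supp_norm. rewrite fsum_eq_0, sqrt_0 by (intros j _; destruct (supp xbar j); ring). lra.
    + intros i _ _. apply fsum_eq_0. intros j Hj. destruct (supp xbar j) eqn:Ej; [|auto].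
      rewrite (supp_norm_eq_0 n xbar v E j Hj Ej). ring.
  -     assert (Hw : spec_set n xbar C (/ s * supp_norm n xbar (mulmx_supp n xbar C v))).
    { assert (Hi : 0 < / s) by (apply Rinv_0_lt_compat; lra).
      exists (fun j => / s * v j). split.
      - rewrite supp_norm_scal. fold s. rewrite Rabs_pos_eq, Rinv_l by lra. lra.
      - replace (/ s) with (Rabs (/ s)) at 1 by (apply Rabs_pos_eq; lra).
        rewrite <- supp_norm_scal. f_equal.
        apply functional_extensionality. intros i. unfold mulmx_supp. rewrite <- fsum_mult_l.
        apply fsum_ext. intros j _. destruct (supp xbar j); ring. }
    apply Hub in Hw. apply Rmult_le_compat_l with (r := s) in Hw; auto.
    rewrite <- Rmult_assoc, Rinv_r in Hw by lra. lra.
Qed.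

Lemma gram_mul_supp m n A xbar d k :
  (forall j, (j < n)%nat -> supp xbar j = false -> d j = 0) ->
  fsum m (fun l => A l k * matvec n A d l)
  = fsum n (fun j => if supp xbar j then gram m A k j * d j else 0).
Proof.
  intros Hd. unfold matvec, gram.
  rewrite (fsum_ext m _ (fun l => fsum n (fun j => A l k * (A l j * d j))))
    by (intros; rewrite fsum_mult_l; auto).
  rewrite fsum_swap. apply fsum_ext. intros j Hj. destruct (supp xbar j) eqn:E.
  - rewrite <- fsum_mult_r. apply fsum_ext. intros; ring.
  - rewrite Hd by auto. apply fsum_eq_0. intros; ring.
Qed.

(* [d = C (B^T B) d] on the support, with [B^T B d] written as [A^T (A d)]. *)
Lemma supp_vector_recover m n A xbar C d i : is_inverse_on_supp m n A xbar C ->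
  (forall j, (j < n)%nat -> supp xbar j = false -> d j = 0) ->
  (i < n)%nat -> supp xbar i = true ->
  d i = mulmx_supp n xbar C (fun k => fsum m (fun l => A l k * matvec n A d l)) i.
Proof.
  intros Hinv Hd Hi Hsi. unfold mulmx_supp.
  rewrite (fsum_ext n _ (fun k => fsum n (fun j =>
             if supp xbar k then (if supp xbar j then C i k * gram m A k j * d j else 0) else 0))).
  2:{ intros k Hk. rewrite (gram_mul_supp m n A xbar) by auto. destruct (supp xbar k).
      - rewrite <- fsum_mult_l. apply fsum_ext. intros j _. destruct (supp xbar j); ring.
      - rewrite fsum_eq_0; auto. }
  rewrite fsum_swap, <- (fsum_delta_l n i d) by auto. apply fsum_ext. intros j Hj.
  destruct (supp xbar j) eqn:Ej.
  - destruct (Hinv i j Hi Hj Hsi Ej) as [Hinv_ij _].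
    rewrite (fsum_ext n _ (fun k => (if supp xbar k then C i k * gram m A k j else 0) * d j))
      by (intros k _; destruct (supp xbar k); ring).
    rewrite fsum_mult_r, Hinv_ij. destruct (Nat.eqb i j); ring.
  - rewrite fsum_eq_0 by (intros k _; destruct (supp xbar k); auto).
    destruct (Nat.eqb_spec i j); [subst; congruence|auto].
Qed.

(** * Local minimality of box minimizers *)

Lemma linear_le_rpow_near_0 q lam K t : 0 < q -> q < 1 -> 0 < lam -> 0 <= K -> 0 <= t ->
  t < Rpower (lam / (K + 1)) (1 / (1 - q)) -> K * t <= lam * rpow t q.
Proof.
  intros Hq0 Hq1 Hl HK Ht Htd. destruct (Req_dec t 0) as [->|Ht0].
  - rewrite rpow_le_0 by lra. lra.
  - rewrite rpow_Rpower by lra. replace q with (1 + (q - 1)) at 1 by ring.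
    rewrite Rpower_plus, Rpower_1 by lra.
    assert (Hpow : Rpower (Rpower (lam / (K + 1)) (1 / (1 - q))) (q - 1) <= Rpower t (q - 1))
      by (apply Rpower_le_nonpos; lra).
    rewrite Rpower_mult in Hpow. replace (1 / (1 - q) * (q - 1)) with (- (1)) in Hpow by (field; lra).
    rewrite Rpower_Ropp, Rpower_1 in Hpow by (apply Rdiv_lt_0_compat; lra).
    replace (/ (lam / (K + 1))) with ((K + 1) / lam) in Hpow by (field; lra).
    assert (K + 1 <= lam * Rpower t (q - 1)).
    { replace (K + 1) with (lam * ((K + 1) / lam)) by (field; lra).
      apply Rmult_le_compat_l; lra. }
    nra.
Qed.

Lemma penalty_dominates_l1 n r g p q lam Kb w :
  is_partition n r g -> 0 < p -> 0 < q -> q < 1 -> 0 < lam -> 0 <= Kb ->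
  (forall j, (j < n)%nat ->
     Rabs (w j) < Rpower (lam / (2 * Kb * (INR n + 1) + 1)) (1 / (1 - q))) ->
  2 * Kb * fsum n (fun j => Rabs (w j)) <= lam * pq_q n r g p q w.
Proof.
  intros [Hpart _] Hp Hq0 Hq1 Hl HKb Hw. pose proof (pos_INR n).
  assert (Hsum : 2 * Kb * (INR n + 1) * fsum n (fun j => Rabs (w j))
                 <= INR n * (lam * pq_q n r g p q w)).
  { rewrite <- fsum_mult_l, <- fsum_const. apply fsum_le. intros j Hj.
    apply Rle_trans with (lam * rpow (Rabs (w j)) q).
    - apply linear_le_rpow_near_0; auto using Rabs_pos. nra.
    - apply Rmult_le_compat_l; [lra|apply rpow_Rabs_le_pq_q; auto]. }
  pose proof (pq_q_nonneg n r g p q w).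
  assert (0 <= fsum n (fun j => Rabs (w j))) by (apply fsum_nonneg; intros; apply Rabs_pos).
  apply Rmult_le_reg_r with (INR n + 1); nra.
Qed.

Lemma cross_term_le m n A (a alpha w : nat -> R) :
  (forall l, Rabs (a l) <= alpha l) ->
  Rabs (fsum m (fun l => a l * matvec n A w l))
  <= fsum n (fun j => fsum m (fun l => alpha l * Rabs (A l j))) * fsum n (fun j => Rabs (w j)).
Proof.
  intros Ha. eapply Rle_trans; [apply fsum_abs|].
  apply Rle_trans with (fsum m (fun l => alpha l * fsum n (fun j => Rabs (A l j) * Rabs (w j)))).
  - apply fsum_le. intros l _. rewrite Rabs_mult. pose proof (Rabs_pos (a l)).
    apply Rmult_le_compat; auto using Rabs_pos.
    eapply Rle_trans; [apply fsum_abs|]. right. apply fsum_ext. intros; apply Rabs_mult.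
  - rewrite (fsum_ext m _ (fun l => fsum n (fun j => alpha l * Rabs (A l j) * Rabs (w j))))
      by (intros; rewrite <- fsum_mult_l; apply fsum_ext; intros; ring).
    rewrite fsum_swap, <- fsum_mult_l. apply fsum_le. intros j Hj.
    rewrite fsum_mult_r. apply Rmult_le_compat_r; [apply Rabs_pos|].
    apply (fsum_term_le n (fun j => fsum m (fun l => alpha l * Rabs (A l j)))); auto.
    intros; apply fsum_nonneg; intros.
    apply Rmult_le_pos; [eapply Rle_trans; [apply Rabs_pos|apply Ha]|apply Rabs_pos].
Qed.

Lemma Flam_ge_supp_split m n r g p q A xbar lam y : 0 < p -> 0 < q -> 0 <= lam ->
  (forall i, (i < r)%nat -> group_nonzero n g xbar i -> group_active n g xbar i) ->
  Flam m n r g p q A xbar lam (on_supp xbar y)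
  + 2 * fsum m (fun l => (matvec n A (on_supp xbar y) l - matvec n A xbar l)
                         * matvec n A (off_supp xbar y) l)
  + lam * pq_q n r g p q (off_supp xbar y)
  <= Flam m n r g p q A xbar lam y.
Proof.
  intros Hp Hq Hl Hact. unfold Flam.
  rewrite (pq_q_supp_split n r g p q xbar y) by auto.
  assert (Hm : forall l, matvec n A y l
                 = matvec n A (on_supp xbar y) l + matvec n A (off_supp xbar y) l).
  { intros l. unfold matvec. rewrite <- fsum_plus. apply fsum_ext. intros j _.
    unfold on_supp, off_supp. destruct (supp xbar j); ring. }
  unfold norm2sq.
  assert (fsum m (fun l => (matvec n A (on_supp xbar y) l - matvec n A xbar l) ^ 2)
          + 2 * fsum m (fun l => (matvec n A (on_supp xbar y) l - matvec n A xbar l)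
                                 * matvec n A (off_supp xbar y) l)
          <= fsum m (fun l => (matvec n A y l - matvec n A xbar l) ^ 2)).
  { rewrite <- fsum_mult_l, <- fsum_plus. apply fsum_le. intros l _. rewrite Hm. pose proof (pow2_ge_0 (matvec n A (off_supp xbar y) l)). nra. }
  lra.
Qed.

Definition cross_const (m n : nat) (A : nat -> nat -> R) : R :=
  fsum n (fun j => fsum m (fun l => fsum n (fun k => Rabs (A l k)) * Rabs (A l j))).

Lemma cross_const_nonneg m n A : 0 <= cross_const m n A.
Proof.
  apply fsum_nonneg. intros. apply fsum_nonneg. intros.
  apply Rmult_le_pos; [apply fsum_nonneg; intros|]; apply Rabs_pos.
Qed.

Lemma Rabs_residual_on_supp_le n A xbar y l :
  (forall j, (j < n)%nat -> supp xbar j = true -> Rabs (y j - xbar j) <= 1) ->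
  Rabs (matvec n A (on_supp xbar y) l - matvec n A xbar l) <= fsum n (fun j => Rabs (A l j)).
Proof.
  intros Hy. rewrite matvec_minus. eapply Rle_trans; [apply fsum_abs|]. apply fsum_le.
  intros j Hj. rewrite Rabs_mult, <- Rmult_1_r.
  apply Rmult_le_compat_l; [apply Rabs_pos|]. unfold on_supp. destruct (supp xbar j) eqn:E.
  - apply Hy; auto.
  - apply supp_false in E. rewrite E, Rminus_diag, Rabs_R0. lra.
Qed.

Lemma Flam_on_supp_le m n r g p q A xbar lam y :
  is_partition n r g -> 0 < p -> 0 < q -> q < 1 -> 0 < lam ->
  (forall i, (i < r)%nat -> group_nonzero n g xbar i -> group_active n g xbar i) ->
  (forall j, (j < n)%nat -> supp xbar j = true -> Rabs (y j - xbar j) <= 1) ->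
  (forall j, (j < n)%nat -> supp xbar j = false ->
     Rabs (y j) < Rpower (lam / (2 * cross_const m n A * (INR n + 1) + 1)) (1 / (1 - q))) ->
  Flam m n r g p q A xbar lam (on_supp xbar y) <= Flam m n r g p q A xbar lam y.
Proof.
  intros Hpart Hp Hq0 Hq1 Hl Hact Hin Hout.
  assert (Hcross := cross_term_le m n A _ _ (off_supp xbar y)
                      (fun l => Rabs_residual_on_supp_le n A xbar y l Hin)).
  cbv beta in Hcross. fold (cross_const m n A) in Hcross.
  assert (Hpen : 2 * cross_const m n A * fsum n (fun j => Rabs (off_supp xbar y j))
                 <= lam * pq_q n r g p q (off_supp xbar y)).
  { apply penalty_dominates_l1; auto using cross_const_nonneg. intros j Hj. unfold off_supp.
    destruct (supp xbar j) eqn:E; [rewrite Rabs_R0; apply Rpower_pos|auto]. }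
  pose proof (Flam_ge_supp_split m n r g p q A xbar lam y Hp Hq0 ltac:(lra) Hact) as Hsplit.
  pose proof (Rle_abs (- fsum m (fun l => (matvec n A (on_supp xbar y) l - matvec n A xbar l)
                                         * matvec n A (off_supp xbar y) l))) as Hneg.
  rewrite Rabs_Ropp in Hneg. lra.
Qed.

Definition box_lo (xbar : nat -> R) (rho : R) (j : nat) : R :=
  if supp xbar j then xbar j - rho else 0.
Definition box_hi (xbar : nat -> R) (rho : R) (j : nat) : R :=
  if supp xbar j then xbar j + rho else 0.

Lemma in_box_spec xbar rho y j : box_lo xbar rho j <= y j <= box_hi xbar rho j ->
  (supp xbar j = true -> Rabs (y j - xbar j) <= rho) /\ (supp xbar j = false -> y j = 0).
Proof.
  unfold box_lo, box_hi. intros Hy. split; intros E; rewrite E in Hy; [apply Rabs_le|]; lra.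
Qed.

Lemma local_minimizer_of_box_min m n r g p q A xbar lam z rho :
  is_partition n r g -> 0 < p -> 0 < q -> q < 1 -> 0 < lam -> 0 < rho -> rho <= 1 ->
  (forall i, (i < r)%nat -> group_nonzero n g xbar i -> group_active n g xbar i) ->
  (forall y, (forall j, (j < n)%nat -> box_lo xbar rho j <= y j <= box_hi xbar rho j) ->
     Flam m n r g p q A xbar lam z <= Flam m n r g p q A xbar lam y) ->
  (forall j, (j < n)%nat -> supp xbar j = true -> Rabs (z j - xbar j) < rho / 2) ->
  (forall j, (j < n)%nat -> supp xbar j = false -> z j = 0) ->
  local_minimizer n (Flam m n r g p q A xbar lam) z.
Proof.
  intros Hpart Hp Hq0 Hq1 Hl Hr0 Hr1 Hact Hmin Hin Hout.
  set (d2 := Rpower (lam / (2 * cross_const m n A * (INR n + 1) + 1)) (1 / (1 - q))).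
  set (d := Rmin (rho / 2) d2).
  assert (Hd : 0 < d) by (apply Rmin_pos; [lra|apply Rpower_pos]).
  assert (Hd1 : d <= rho / 2) by apply Rmin_l. assert (Hd2 : d <= d2) by apply Rmin_r.
  exists d. split; [auto|]. intros y Hy.
  assert (Hyz : forall j, (j < n)%nat -> Rabs (y j - z j) < d)
    by (intros; apply (Rabs_lt_of_norm2sq n (fun j => y j - z j)); auto).
  assert (Hclose : forall j, (j < n)%nat -> supp xbar j = true -> Rabs (y j - xbar j) < rho).
  { intros j Hj E. specialize (Hin j Hj E). specialize (Hyz j Hj).
    replace (y j - xbar j) with ((y j - z j) + (z j - xbar j)) by ring.
    eapply Rle_lt_trans; [apply Rabs_triang|lra]. }
  apply Rle_trans with (Flam m n r g p q A xbar lam (on_supp xbar y)).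
  - apply Hmin. intros j Hj. unfold on_supp, box_lo, box_hi.
    destruct (supp xbar j) eqn:E; [|lra]. specialize (Hclose j Hj E). apply Rabs_def2 in Hclose. lra.
  - apply Flam_on_supp_le; auto.
    + intros j Hj E. specialize (Hclose j Hj E). lra.
    + intros j Hj E. rewrite <- (Rminus_0_r (y j)), <- (Hout j Hj E). specialize (Hyz j Hj).
      fold d2. lra.
Qed.

(** * The error estimate *)

Definition inv_gram_bound (m n : nat) (A C : nat -> nat -> R) : R :=
  fsum n (fun i => fsum n (fun k => Rabs (C i k) * fsum m (fun l => Rabs (A l k)))).

Lemma inv_gram_bound_nonneg m n A C : 0 <= inv_gram_bound m n A C.
Proof.
  apply fsum_nonneg. intros. apply fsum_nonneg. intros.
  apply Rmult_le_pos; [|apply fsum_nonneg; intros]; apply Rabs_pos.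
Qed.

Lemma Rabs_supp_le_residual m n A xbar C d i : is_inverse_on_supp m n A xbar C ->
  (forall j, (j < n)%nat -> supp xbar j = false -> d j = 0) ->
  (i < n)%nat -> supp xbar i = true ->
  Rabs (d i) <= inv_gram_bound m n A C * sqrt (norm2sq m (matvec n A d)).
Proof.
  intros Hinv Hd Hi Hsi. rewrite (supp_vector_recover m n A xbar C d i) by auto.
  set (Q := sqrt (norm2sq m (matvec n A d))). assert (0 <= Q) by apply sqrt_pos.
  apply Rle_trans with (fsum n (fun k => Rabs (C i k) * fsum m (fun l => Rabs (A l k))) * Q).
  - unfold mulmx_supp. eapply Rle_trans; [apply fsum_abs|]. rewrite <- fsum_mult_r.
    apply fsum_le. intros k Hk. destruct (supp xbar k).
    + rewrite Rabs_mult, Rmult_assoc. apply Rmult_le_compat_l; [apply Rabs_pos|].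
      eapply Rle_trans; [apply fsum_abs|]. rewrite <- fsum_mult_r. apply fsum_le. intros l Hl.
      rewrite Rabs_mult. apply Rmult_le_compat_l; [apply Rabs_pos|].
      apply (Rabs_le_sqrt_norm2sq m (matvec n A d)); auto.
    + rewrite Rabs_R0. apply Rmult_le_pos; [apply Rmult_le_pos|auto];
        [|apply fsum_nonneg; intros]; apply Rabs_pos.
  - apply Rmult_le_compat_r; auto. unfold inv_gram_bound.
    apply (fsum_term_le n (fun i => fsum n (fun k => Rabs (C i k) * fsum m (fun l => Rabs (A l k))))); auto.
    intros. apply fsum_nonneg. intros.
    apply Rmult_le_pos; [|apply fsum_nonneg; intros]; apply Rabs_pos.
Qed.

Lemma Flam_box_min_exists m n r g p q A xbar lam rho : 0 < p -> 0 < q -> 0 <= rho ->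
  exists z, (forall j, (j < n)%nat -> box_lo xbar rho j <= z j <= box_hi xbar rho j) /\
    forall y, (forall j, (j < n)%nat -> box_lo xbar rho j <= y j <= box_hi xbar rho j) ->
      Flam m n r g p q A xbar lam z <= Flam m n r g p q A xbar lam y.
Proof.
  intros Hp Hq Hr. apply BoxMinimum.box_min_exists.
  - intros j. unfold box_lo, box_hi. destruct (supp xbar j); lra.
  - apply continuous_coords_Flam; auto.
  - intros x y Hxy. apply Flam_ext. intros j Hj. apply Hxy. lia.
Qed.

Lemma residual_le_of_box_min m n r g p q A xbar lam rho z : 0 <= lam -> 0 <= rho ->
  (forall y, (forall j, (j < n)%nat -> box_lo xbar rho j <= y j <= box_hi xbar rho j) ->
     Flam m n r g p q A xbar lam z <= Flam m n r g p q A xbar lam y) ->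
  norm2sq m (matvec n A (fun j => z j - xbar j)) <= lam * pq_q n r g p q xbar.
Proof.
  intros Hl Hr Hmin.
  assert (Hx : Flam m n r g p q A xbar lam z <= Flam m n r g p q A xbar lam xbar).
  { apply Hmin. intros j Hj. unfold box_lo, box_hi.
    destruct (supp xbar j) eqn:E; [|apply supp_false in E]; lra. }
  assert (H0 : norm2sq m (fun l => matvec n A xbar l - matvec n A xbar l) = 0)
    by (apply fsum_eq_0; intros; ring).
  unfold Flam in Hx. rewrite H0 in Hx.
  rewrite (norm2sq_ext m _ (fun l => matvec n A z l - matvec n A xbar l))
    by (intros; symmetry; apply matvec_minus).
  pose proof (Rmult_le_pos lam _ Hl (pq_q_nonneg n r g p q z)). lra.
Qed.

(* The residual bound [F z <= F xbar] alone keeps a box minimizer in the inner half of the box. *)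
Lemma box_min_inner m n r g p q A xbar C lam rho z :
  is_inverse_on_supp m n A xbar C -> 0 <= lam -> 0 <= rho ->
  (forall y, (forall j, (j < n)%nat -> box_lo xbar rho j <= y j <= box_hi xbar rho j) ->
     Flam m n r g p q A xbar lam z <= Flam m n r g p q A xbar lam y) ->
  (forall j, (j < n)%nat -> supp xbar j = false -> z j = 0) ->
  inv_gram_bound m n A C ^ 2 * lam * pq_q n r g p q xbar < (rho / 2) ^ 2 ->
  forall i, (i < n)%nat -> supp xbar i = true -> Rabs (z i - xbar i) < rho / 2.
Proof.
  intros Hinv Hl Hr Hmin HzN Hsmall i Hi E.
  set (d := fun j => z j - xbar j).
  assert (Hd0 : forall j, (j < n)%nat -> supp xbar j = false -> d j = 0).
  { intros j Hj Ej. unfold d. rewrite HzN by auto. apply supp_false in Ej. rewrite Ej. ring. }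
  pose proof (Rabs_supp_le_residual m n A xbar C d i Hinv Hd0 Hi E) as Hdi.
  pose proof (residual_le_of_box_min m n r g p q A xbar lam rho z Hl Hr Hmin) as HQ.
  fold d in HQ. change (Rabs (d i) < rho / 2). pose proof (inv_gram_bound_nonneg m n A C) as HK.
  set (K := inv_gram_bound m n A C) in *. set (Q := norm2sq m (matvec n A d)) in *.
  assert (HKQ : 0 <= K * sqrt Q) by (apply Rmult_le_pos; [auto|apply sqrt_pos]).
  assert (Hsq : (K * sqrt Q) ^ 2 <= K ^ 2 * (lam * pq_q n r g p q xbar)).
  { rewrite Rpow_mult_distr, pow2_sqrt by apply norm2sq_nonneg.
    apply Rmult_le_compat_l; [apply pow2_ge_0|auto]. }
  destruct (Rlt_or_le (K * sqrt Q) (rho / 2)) as [|Hge]; [lra|].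
  assert ((rho / 2) ^ 2 <= (K * sqrt Q) ^ 2) by (apply pow_incr; lra). nra.
Qed.

Lemma box_min_first_order m n r g p q A xbar lam rho z k :
  is_partition n r g -> 0 < p -> 0 < q -> (k < n)%nat -> supp xbar k = true ->
  rho <= Rabs (xbar k) ->
  (forall y, (forall j, (j < n)%nat -> box_lo xbar rho j <= y j <= box_hi xbar rho j) ->
     Flam m n r g p q A xbar lam z <= Flam m n r g p q A xbar lam y) ->
  (forall j, (j < n)%nat -> box_lo xbar rho j <= z j <= box_hi xbar rho j) ->
  Rabs (z k - xbar k) < rho / 2 ->
  fsum m (fun l => A l k * matvec n A (fun j => z j - xbar j) l)
  = - (lam / 2) * penalty_grad n g p q z k.
Proof.
  intros [Hpart _] Hp Hq Hk Hsk Hrho Hmin Hzb Hzk.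
  assert (Hshift : forall t, Rabs t < rho / 2 -> Rabs (z k + t - xbar k) < rho).
  { intros t Ht. replace (z k + t - xbar k) with ((z k - xbar k) + t) by ring.
    eapply Rle_lt_trans; [apply Rabs_triang|lra]. }
  assert (Hcrit := first_order_condition m n r g p q A xbar lam z k (rho / 2) Hp Hq Hk (Hpart k Hk)).
  rewrite (fsum_ext m _ (fun l => (matvec n A z l - matvec n A xbar l) * A l k))
    by (intros; rewrite matvec_minus; ring).
  cut (2 * fsum m (fun l => (matvec n A z l - matvec n A xbar l) * A l k)
       + lam * penalty_grad n g p q z k = 0); [lra|].
  apply Hcrit.
  - pose proof (Rabs_pos (z k - xbar k)). lra.
  - intros t Ht Hzero. specialize (Hshift t Ht).
    rewrite Hzero, Rminus_0_l, Rabs_Ropp in Hshift. lra.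
  - intros t Ht. apply Hmin. intros j Hj. unfold shift_coord.
    destruct (Nat.eqb_spec j k) as [->|]; [|rewrite Rplus_0_r; auto].
    unfold box_lo, box_hi. rewrite Hsk. specialize (Hshift t Ht). apply Rabs_def2 in Hshift. lra.
Qed.

Lemma norm2sq_le_of_supp_repr n xbar C d h lam B : 0 <= lam ->
  (forall j, (j < n)%nat -> supp xbar j = false -> d j = 0) ->
  (forall i, (i < n)%nat -> supp xbar i = true -> d i = - (lam / 2) * mulmx_supp n xbar C h i) ->
  supp_norm n xbar h ^ 2 <= 4 * B ->
  norm2sq n d <= lam ^ 2 * spec_norm n xbar C ^ 2 * B.
Proof.
  intros Hl Hd0 Hd Hh.
  assert (Hn : norm2sq n d = supp_norm n xbar d ^ 2).
  { unfold supp_norm. rewrite pow2_sqrt by apply supp_sum_sqr_nonneg. apply fsum_ext.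
    intros j Hj. destruct (supp xbar j) eqn:E; [auto|]. rewrite Hd0 by auto. ring. }
  assert (Hs : supp_norm n xbar d <= lam / 2 * (spec_norm n xbar C * supp_norm n xbar h)).
  { rewrite (supp_norm_ext n xbar d (fun i => - (lam / 2) * mulmx_supp n xbar C h i)) by auto.
    rewrite supp_norm_scal, Rabs_Ropp, Rabs_pos_eq by lra.
    apply Rmult_le_compat_l; [lra|apply supp_norm_mulmx_le]. }
  rewrite Hn. eapply Rle_trans; [apply pow_incr; split; [apply sqrt_pos|apply Hs]|].
  replace (lam ^ 2 * spec_norm n xbar C ^ 2 * B)
    with ((lam / 2) ^ 2 * spec_norm n xbar C ^ 2 * (4 * B)) by field.
  rewrite !Rpow_mult_distr, Rmult_assoc.
  apply Rmult_le_compat_l; [apply pow2_ge_0|].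
  apply Rmult_le_compat_l; [apply pow2_ge_0|auto].
Qed.

Lemma local_minimizer_near_xbar m n r g p q A xbar C c rho lam :
  is_partition n r g -> 0 < q -> q < 1 -> 1 <= p ->
  (forall i, (i < r)%nat -> group_nonzero n g xbar i -> group_active n g xbar i) ->
  is_inverse_on_supp m n A xbar C ->
  1 < c -> Rpower c (2 * p) = 2 -> 0 < rho -> rho <= 1 ->
  (forall j, (j < n)%nat -> supp xbar j = true -> rho <= (1 - / c) * Rabs (xbar j)) ->
  0 < lam -> inv_gram_bound m n A C ^ 2 * lam * pq_q n r g p q xbar < (rho / 2) ^ 2 ->
  exists z, local_minimizer n (Flam m n r g p q A xbar lam) z /\
    norm2sq n (fun j => z j - xbar j)
    <= lam ^ 2 * q ^ 2 * num_nonzero_groups n r g xbar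
       * spec_norm n xbar C ^ 2 * max_term n r g p q xbar.
Proof.
  intros Hpart Hq0 Hq1 Hp Hact Hinv Hc1 Hc2 Hr0 Hr1 Hrho Hl Hsmall.
  assert (Hic : 0 < / c < 1) by (split; [apply Rinv_0_lt_compat|rewrite <- Rinv_1;
                                        apply Rinv_lt_contravar]; lra).
  assert (Hrx : forall j, (j < n)%nat -> supp xbar j = true -> rho <= Rabs (xbar j)).
  { intros j Hj E. specialize (Hrho j Hj E). pose proof (Rabs_pos (xbar j)). nra. }
  destruct (Flam_box_min_exists m n r g p q A xbar lam rho) as [z [Hzb Hmin]]; try lra.
  set (d := fun j => z j - xbar j).
  assert (HzT : forall j, (j < n)%nat -> supp xbar j = true -> Rabs (d j) <= rho)
    by (intros j Hj; apply (in_box_spec xbar rho z j (Hzb j Hj))).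
  assert (HzN : forall j, (j < n)%nat -> supp xbar j = false -> z j = 0)
    by (intros j Hj; apply (in_box_spec xbar rho z j (Hzb j Hj))).
  assert (Hd0 : forall j, (j < n)%nat -> supp xbar j = false -> d j = 0).
  { intros j Hj E. unfold d. rewrite HzN by auto. apply supp_false in E. rewrite E. ring. }
  assert (Hint : forall i, (i < n)%nat -> supp xbar i = true -> Rabs (d i) < rho / 2)
    by (apply (box_min_inner m n r g p q A xbar C lam rho z); auto; lra).
  exists z. split.
  { apply (local_minimizer_of_box_min m n r g p q A xbar lam z rho); auto; lra. }
  replace (lam ^ 2 * q ^ 2 * num_nonzero_groups n r g xbar * spec_norm n xbar C ^ 2
           * max_term n r g p q xbar)
    with (lam ^ 2 * spec_norm n xbar C ^ 2
          * (q ^ 2 * num_nonzero_groups n r g xbar * max_term n r g p q xbar)) by ring.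
  apply (norm2sq_le_of_supp_repr n xbar C d (fun k => penalty_grad n g p q z k) lam); auto; [lra| |].
  - intros i Hi E. rewrite (supp_vector_recover m n A xbar C d i) by auto. unfold mulmx_supp.
    rewrite <- fsum_mult_l. apply fsum_ext. intros k Hk. destruct (supp xbar k) eqn:Ek; [|ring].
    pose proof (box_min_first_order m n r g p q A xbar lam rho z k) as Hfo. fold d in Hfo.
    rewrite Hfo by first [lra | exact (Hint k Hk Ek) | auto]. ring.
  - unfold supp_norm. rewrite pow2_sqrt by apply supp_sum_sqr_nonneg.
    apply (sum_penalty_grad_sqr_le n r g p q xbar z c rho); auto.
Qed.

Lemma exists_uniform_lower_bound n (P : nat -> Prop) (a : nat -> R) :
  (forall j, (j < n)%nat -> P j -> 0 < a j) ->
  exists rho, 0 < rho /\ rho <= 1 /\ forall j, (j < n)%nat -> P j -> rho <= a j.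
Proof.
  induction n as [|n IH]; intros H.
  - exists 1. repeat split; [lra|lra|]. intros; lia.
  - destruct IH as [rho [H1 [H2 H3]]]; [intros; apply H; auto; lia|].
    destruct (classic (P n)) as [Pn|Pn].
    + assert (0 < a n) by (apply H; auto).
      exists (Rmin rho (a n)). repeat split; [apply Rmin_pos; auto|
        eapply Rle_trans; [apply Rmin_l|auto]|].
      intros j Hj Pj. destruct (Nat.eq_dec j n) as [->|]; [apply Rmin_r|].
      eapply Rle_trans; [apply Rmin_l|apply H3; auto; lia].
    + exists rho. repeat split; auto. intros j Hj Pj.
      destruct (Nat.eq_dec j n) as [->|]; [tauto|apply H3; auto; lia].
Qed.

Lemma exists_Rpower_eq_2 p : 0 < p -> exists c, 1 < c /\ Rpower c (2 * p) = 2.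
Proof.
  intros Hp. exists (Rpower 2 (1 / (2 * p))). split.
  - replace 1 with (Rpower 2 0) at 1 by (apply Rpower_O; lra).
    apply Rpower_lt; [lra|]. apply Rdiv_lt_0_compat; lra.
  - rewrite Rpower_mult. replace (1 / (2 * p) * (2 * p)) with 1 by (field; lra).
    apply Rpower_1; lra.
Qed.

Lemma choice_on {X Y : Type} (y0 : Y) (P : X -> Prop) (Q : X -> Y -> Prop) :
  (forall x, P x -> exists y, Q x y) -> exists f : X -> Y, forall x, P x -> Q x (f x).
Proof.
  intros H. apply (choice (fun x y => P x -> Q x y)). intros x.
  destruct (classic (P x)) as [Hx|Hx]; [destruct (H x Hx) as [y Hy]|exists y0]; eauto.
  intros; contradiction.
Qed.

Theorem theorem2p2 (m n r : nat) (g : nat -> nat) (p q : R)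
  (A : nat -> nat -> R) (xbar : nat -> R) (C : nat -> nat -> R) :
  is_partition n r g ->
  0 < q -> q < 1 -> 1 <= p ->
  (forall i, (i < r)%nat -> group_nonzero n g xbar i -> group_active n g xbar i) ->
  (* columns of A indexed by the nonzero components of xbar are linearly independent *)
  (forall v : nat -> R,
     (forall j, (j < n)%nat -> xbar j = 0 -> v j = 0) ->
     (forall l, (l < m)%nat -> matvec n A v l = 0) ->
     forall j, (j < n)%nat -> v j = 0) ->
  (* C = (B^T B)^{-1} *)
  is_inverse_on_supp m n A xbar C ->
  exists kappa, 0 < kappa /\
    exists xstar : R -> nat -> R,
      forall lam, 0 < lam < kappa ->
        local_minimizer n (Flam m n r g p q A xbar lam) (xstar lam) /\
        norm2sq n (fun j => xstar lam j - xbar j) <=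
          lam ^ 2 * q ^ 2 * num_nonzero_groups n r g xbar
          * (spec_norm n xbar C) ^ 2 * max_term n r g p q xbar.
Proof.
  intros Hpart Hq0 Hq1 Hp Hact _ Hinv.
  destruct (exists_Rpower_eq_2 p) as [c [Hc1 Hc2]]; [lra|].
  destruct (exists_uniform_lower_bound n (fun j => supp xbar j = true)
              (fun j => (1 - / c) * Rabs (xbar j))) as [rho [Hr0 [Hr1 Hrho]]].
  { intros j Hj E. apply Rmult_lt_0_compat; [|apply Rabs_pos_lt, supp_true; auto].
    assert (/ c < 1) by (rewrite <- Rinv_1; apply Rinv_lt_contravar; lra). lra. }
  set (M := inv_gram_bound m n A C ^ 2 * pq_q n r g p q xbar).
  assert (HM : 0 <= M) by (apply Rmult_le_pos; [apply pow2_ge_0|apply pq_q_nonneg]).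
  assert (Hrho2 : 0 < (rho / 2) ^ 2) by (apply pow_lt; lra).
  exists ((rho / 2) ^ 2 / (M + 1)). split; [apply Rdiv_lt_0_compat; lra|].
  apply (choice_on (fun _ => 0) (fun lam => 0 < lam < (rho / 2) ^ 2 / (M + 1))
    (fun lam z => local_minimizer n (Flam m n r g p q A xbar lam) z /\
       norm2sq n (fun j => z j - xbar j) <= lam ^ 2 * q ^ 2 * num_nonzero_groups n r g xbar
                                             * spec_norm n xbar C ^ 2 * max_term n r g p q xbar)).
  intros lam Hlam.
  apply (local_minimizer_near_xbar m n r g p q A xbar C c rho lam); auto; try lra.
  assert (lam * (M + 1) < (rho / 2) ^ 2).
  { destruct Hlam as [_ Hlam]. apply (Rmult_lt_compat_r (M + 1)) in Hlam; [|lra].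
    unfold Rdiv in Hlam. rewrite Rmult_assoc, Rinv_l, Rmult_1_r in Hlam by lra. lra. }
  unfold M in *. nra.
Qed.
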